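(* For all integers $n\ge 0$ and $m>nt$, \[ \mathcal{L}^{(t)}\big(U^{(t)}_m(x)\,U^{(t)}_n(x)\big)=0 \quad\text{and}\quad \mathcal{L}^{(t)}\big(U^{(t)}_{nt}(x)\,U^{(t)}_n(x)\big)=1 . \]
   Context: Fix an integer $t\ge1$. For $n\ge 0$ let $P_n$ be the path graph with vertices $1,\dots,n$ and edges $\{i,i+1\}$. A $t$-path in $P_n$ is a set of $t+1$ consecutive vertices $\{i,\dots,i+t\}$. Define $U^{(t)}_n(x)=\sum_{F}(-1)^{|F|}x^{\,n-(t+1)|F|}$, the sum over all families $F$ of pairwise vertex-disjoint $t$-paths in $P_n$ ($U^{(t)}_0=1$). Let $\mu^{(t)}_m$ be the number of noncrossing set partitions of $[m]$ all of whose blocks have size $t+1$ ($\mu^{(t)}_0=1$; noncrossing means no $a<b<c<d$ with $a,c$ in one block and $b,d$ in another), and let $\mathcal{L}^{(t)}$ be the linear functional on polynomials with $\mathcal{L}^{(t)}(x^m)=\mu^{(t)}_m$. *)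

From HB Require Import structures.
From mathcomp Require Import all_boot all_order all_algebra.
Set Implicit Arguments. Unset Strict Implicit. Unset Printing Implicit Defensive.
Import GRing.Theory.
Local Open Scope ring_scope.

(* Vertices of P_n are 1..n, encoded by i : 'I_n standing for vertex i+1.
   A t-path {i,...,i+t} is encoded by its starting vertex s : 'I_n, and it
   exists in P_n iff s + t < n (i.e. its last vertex i+t is <= n). *)
Definition tpath_vertices (t n : nat) (s : 'I_n) : {set 'I_n} :=
  [set v : 'I_n | (s <= v)%N && (v <= s + t)%N].

Definition disjoint_tpath_family (t n : nat) (F : {set 'I_n}) : bool :=
  [forall s in F, (s + t < n)%N] &&
  [forall s in F, forall s' in F,
     (s != s') ==> [disjoint tpath_vertices t s & tpath_vertices t s']].

Definition U (t n : nat) : {poly int} :=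
  \sum_(F : {set 'I_n} | disjoint_tpath_family t F)
     (-1) ^+ #|F| *: 'X^(n - t.+1 * #|F|).

Definition noncrossing (m : nat) (P : {set {set 'I_m}}) : bool :=
  [forall B1 in P, forall B2 in P, (B1 != B2) ==>
    [forall a : 'I_m, forall b : 'I_m, forall c : 'I_m, forall d : 'I_m,
      ~~ [&& (a < b)%N, (b < c)%N, (c < d)%N,
             a \in B1, c \in B1, b \in B2 & d \in B2]]].

Definition mu (t m : nat) : nat :=
  #|[set P : {set {set 'I_m}} |
      [&& partition P [set: 'I_m],
          [forall B in P, #|B| == t.+1] & noncrossing P]]|.

Definition Lfun (t : nat) (p : {poly int}) : int :=
  \sum_(i < size p) p`_i * (mu t i)%:R.

From HB Require Import structures.
From mathcomp Require Import all_boot all_order all_algebra zify.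
Set Implicit Arguments. Unset Strict Implicit. Unset Printing Implicit Defensive.
Import GRing.Theory.
Local Open Scope ring_scope.

(* 1. L is linear with L(x^k) = mu_k.
   2. A set of starting points is a family of disjoint t-paths iff the paths
      fit in P_n and the starts are pairwise more than t apart; such paths
      cover (t+1)|F| vertices.
   3. Splitting families by the use of the last t-path gives the recurrence
      U_(h+1) = x U_h - U_(h-t) for h >= t, while U_h = x^h for h <= t.
   4. Key identity L(U_h) = [h = 0].  Removing the paths of a family F from a
      noncrossing partition of [h] and relabelling the rest increasingly
      shows that mu_(h-(t+1)|F|) counts the partitions containing those
      paths as blocks.  Exchanging the sums, every partition contributes the
      signed count of the subsets of its t-path blocks, which vanishes unless
      it has none; but a block with the smallest hull is always a t-path, so
      only the empty partition of [0] survives.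
   5. The moments L(x^k U_h) obey L(x^(k+1) U_h) = L(x^k U_(h+1)) +
      L(x^k U_(h-t)), so they vanish for h > k t and equal 1 for h = k t.
   6. Expanding U_n in L(U_m U_n) reduces both relations to step 5. *)

Section LinearFunctional.
Variable t : nat.

Lemma Lfun_widen (p : {poly int}) (N : nat) : (size p <= N)%N ->
  Lfun t p = \sum_(i < N) p`_i * (mu t i)%:R.
Proof.
move=> hN; rewrite /Lfun (big_ord_widen N (fun i => p`_i * (mu t i)%:R) hN).
rewrite big_mkcond /=; apply: eq_bigr => i _.
by case: ltnP => // hi; rewrite nth_default // mul0r.
Qed.

Lemma Lfun_add (p q : {poly int}) : Lfun t (p + q) = Lfun t p + Lfun t q.
Proof.
pose N := maxn (size p) (size q).
rewrite (@Lfun_widen _ N) ?(leq_trans (size_polyD _ _)) //.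
rewrite (@Lfun_widen p N) ?leq_maxl // (@Lfun_widen q N) ?leq_maxr //.
by rewrite -big_split; apply: eq_bigr => i _; rewrite coefD mulrDl.
Qed.

Lemma Lfun_scale (c : int) (p : {poly int}) : Lfun t (c *: p) = c * Lfun t p.
Proof.
rewrite (@Lfun_widen _ (size p)) ?size_scale_leq // (@Lfun_widen p (size p)) //.
by rewrite mulr_sumr; apply: eq_bigr => i _; rewrite coefZ mulrA.
Qed.

Lemma Lfun_sum (I : finType) (P : pred I) (F : I -> {poly int}) :
  Lfun t (\sum_(i | P i) F i) = \sum_(i | P i) Lfun t (F i).
Proof.
have Lfun0 : Lfun t 0 = 0 by rewrite /Lfun size_poly0 big_ord0.
exact: (big_morph _ Lfun_add Lfun0).
Qed.

Lemma Lfun_Xn (k : nat) : Lfun t 'X^k = (mu t k)%:R.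
Proof.
rewrite /Lfun size_polyXn big_ord_recr /= big1 ?add0r.
  by rewrite coefXn eqxx mul1r.
by move=> i _; rewrite coefXn (ltn_eqF (ltn_ord i)) mul0r.
Qed.

End LinearFunctional.

Section TpathFamilies.
Variable t : nat.

Definition spaced (n : nat) (F : {set 'I_n}) : bool :=
  [forall s in F, forall s' in F, (s < s')%N ==> (s + t < s')%N].

Lemma in_tpath (n : nat) (s v : 'I_n) :
  (v \in tpath_vertices t s) = (s <= v <= s + t)%N.
Proof. by rewrite inE. Qed.

Lemma tpath_start (n : nat) (s : 'I_n) : s \in tpath_vertices t s.
Proof. by rewrite in_tpath leqnn leq_addr. Qed.

Lemma disjoint_tpath (n : nat) (s s' : 'I_n) : (s < s')%N ->
  [disjoint tpath_vertices t s & tpath_vertices t s'] = (s + t < s')%N.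
Proof.
move=> lt_ss'; apply/idP/idP => [dis|lt_end].
  have := disjointFl dis (tpath_start s').
  by rewrite in_tpath (ltnW lt_ss') ltnNge => /negbT.
apply/pred0P => v /=; apply/negbTE/andP; rewrite !in_tpath => -[/andP[_ vs] /andP[sv _]].
by move: (leq_trans lt_end sv); rewrite ltnNge vs.
Qed.

Lemma disjoint_tpath_familyE (n : nat) (F : {set 'I_n}) :
  disjoint_tpath_family t F = [forall s in F, (s + t < n)%N] && spaced F.
Proof.
rewrite /disjoint_tpath_family /spaced; congr (_ && _).
apply/forall_inP/forall_inP => H s sF; apply/forall_inP => s' s'F.
  apply/implyP => lt_ss'; rewrite -disjoint_tpath //.
  by apply: (implyP (forall_inP (H s sF) s' s'F)); rewrite -val_eqE /= neq_ltn lt_ss'.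
apply/implyP => ne; case: (ltngtP s s') => [lt|lt|eq].
- by rewrite disjoint_tpath // (implyP (forall_inP (H s sF) s' s'F)).
- by rewrite disjoint_sym disjoint_tpath // (implyP (forall_inP (H s' s'F) s sF)).
- by move: ne; rewrite (val_inj eq) eqxx.
Qed.

Lemma family_set0 (n : nat) : disjoint_tpath_family t (set0 : {set 'I_n}).
Proof.
by rewrite disjoint_tpath_familyE; apply/andP; split; apply/forall_inP => s; rewrite inE.
Qed.

Lemma tpath_inj (n : nat) : injective (@tpath_vertices t n).
Proof.
move=> s s' E; have s_in := tpath_start s; have s'_in := tpath_start s'.
rewrite E in_tpath in s_in; rewrite -E in_tpath in s'_in.
case/andP: s_in => s's _; case/andP: s'_in => ss' _.
by apply: val_inj; apply/eqP; rewrite eqn_leq s's ss'.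
Qed.

Lemma card_tpath (n : nat) (s : 'I_n) : #|tpath_vertices t s| = minn t.+1 (n - s).
Proof.
have -> : #|tpath_vertices t s| = (\sum_(0 <= v < n) ((s <= v <= s + t)%N : nat))%N.
  rewrite -sum1_card big_mkcond big_mkord /=; apply: eq_bigr => i _.
  by rewrite inE; case: (_ && _).
move: (val s) => {}s; elim: n => [|n IH]; first by rewrite big_geq // sub0n minn0.
rewrite big_nat_recr //= IH.
have [lt_ns|le_sn] := ltnP n s.
  by rewrite /= addn0 (eqP (_ : n - s == 0)%N) ?subn_eq0 ?(ltnW lt_ns) //
    (eqP (_ : n.+1 - s == 0)%N) ?subn_eq0.
have [le_n|lt_n] /= := leqP n (s + t); last first.
  by rewrite addn0 !(minn_idPl _) // ltn_subRL // ltnS ltnW.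
rewrite !(minn_idPr _) ?subSn // ?leq_subLR ?addnS ?ltnS 1?addnC //.
  by rewrite leq_subLR.
by apply: (leq_trans le_n); rewrite addnC leqnSn.
Qed.

Lemma card_tpath_fit (n : nat) (s : 'I_n) :
  (s + t < n)%N -> #|tpath_vertices t s| = t.+1.
Proof. by move=> fit; rewrite card_tpath; apply/minn_idPl; rewrite ltn_subRL. Qed.

Definition blocks (n : nat) (F : {set 'I_n}) : {set {set 'I_n}} :=
  [set tpath_vertices t s | s in F].

Lemma blocks_trivIset (n : nat) (F : {set 'I_n}) :
  disjoint_tpath_family t F -> trivIset (blocks F).
Proof.
case/andP=> _ /forall_inP disF.
apply/trivIsetP => _ _ /imsetP[s sF ->] /imsetP[s' s'F ->] ne.
by apply: (implyP (forall_inP (disF s sF) s' s'F)); apply: contraNneq ne => ->.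
Qed.

Lemma card_blocks (n : nat) (F : {set 'I_n}) : #|blocks F| = #|F|.
Proof. by rewrite card_imset //; apply: tpath_inj. Qed.

Lemma card_cover_blocks (n : nat) (F : {set 'I_n}) :
  disjoint_tpath_family t F -> #|cover (blocks F)| = (t.+1 * #|F|)%N.
Proof.
move=> famF; move/eqP: (blocks_trivIset famF) => <-.
rewrite -card_blocks mulnC -sum_nat_const; apply: eq_bigr => _ /imsetP[s sF ->].
by move: famF; rewrite disjoint_tpath_familyE => /andP[/forall_inP fit _]; rewrite card_tpath_fit ?fit.
Qed.

Lemma family_size (n : nat) (F : {set 'I_n}) :
  disjoint_tpath_family t F -> (t.+1 * #|F| <= n)%N.
Proof.
move=> famF; rewrite -card_cover_blocks //.
by rewrite (leq_trans (max_card _)) ?card_ord.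
Qed.

End TpathFamilies.

Section ImageReindex.
Variables (T T' : finType) (w : T -> T').
Hypothesis w_inj : injective w.

Lemma preimset_imset (G : {set T}) : w @^-1: (w @: G) = G.
Proof. by apply/setP => x; rewrite inE mem_imset. Qed.

Lemma imset_preimset (F : {set T'}) : F \subset codom w -> w @: (w @^-1: F) = F.
Proof.
move=> /subsetP F_codom; apply/setP => y.
apply/imsetP/idP => [[x]|yF]; first by rewrite inE => ? ->.
have /codomP[x eq_y] := F_codom y yF.
by exists x; rewrite // inE -eq_y.
Qed.

Lemma reindex_imset (R : nmodType) (P : pred {set T'}) (E : {set T'} -> R) :
  (forall F, P F -> F \subset codom w) ->
  \sum_(F | P F) E F = \sum_(G : {set T} | P (w @: G)) E (w @: G).
Proof.
move=> in_codom.
rewrite (reindex_onto (fun G : {set T} => w @: G) (fun F : {set T'} => w @^-1: F)) /=.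
  by apply: eq_bigl => G; rewrite preimset_imset eqxx andbT.
by move=> F /in_codom; apply: imset_preimset.
Qed.

End ImageReindex.

Lemma sum_setU1 (R : nmodType) (T : finType) (a : T) (P : pred {set T})
    (E : {set T} -> R) :
  \sum_(F | P F && (a \in F)) E F =
  \sum_(F | P (a |: F) && (a \notin F)) E (a |: F).
Proof.
rewrite (reindex_onto (fun F => a |: F) (fun F => F :\ a)) /=; last first.
  by move=> F /andP[_ aF]; rewrite setD1K.
apply: eq_bigl => F; rewrite setU11 andbT; congr (_ && _).
by apply/eqP/idP => [<-|aF]; [rewrite setD11 | rewrite setU1K].
Qed.

Lemma codom_widen (m n : nat) (le_mn : (m <= n)%N) (x : 'I_n) :
  (x < m)%N -> x \in codom (widen_ord le_mn).
Proof. by move=> lt_xm; apply/codomP; exists (Ordinal lt_xm); apply: val_inj. Qed.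

Lemma widen_inj (m n : nat) (le_mn : (m <= n)%N) : injective (widen_ord le_mn).
Proof. by move=> x y /(congr1 val) /= /val_inj. Qed.

Section Recurrence.
Variable t : nat.

Lemma family_imset (m n : nat) (w : 'I_m -> 'I_n) (G : {set 'I_m}) :
  (forall i, val (w i) = val i) ->
  disjoint_tpath_family t (w @: G) = [forall s in G, (s + t < n)%N] && spaced t G.
Proof.
move=> w_val; rewrite disjoint_tpath_familyE; congr (_ && _).
  apply/forall_inP/forall_inP => [fit s sG|fit _ /imsetP[s sG ->]].
    by rewrite -w_val fit ?imset_f.
  by rewrite w_val fit.
apply/forall_inP/forall_inP => [sp s sG|sp _ /imsetP[s sG ->]].
  apply/forall_inP => s' s'G; rewrite -!w_val.
  exact: (forall_inP (sp _ (imset_f w sG)) _ (imset_f w s'G)).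
apply/forall_inP => _ /imsetP[s' s'G ->]; rewrite !w_val.
exact: (forall_inP (sp s sG) s' s'G).
Qed.

(* For h <= t no t-path fits in P_h, so U_h = x^h. *)
Lemma U_small (h : nat) : (h <= t)%N -> U t h = 'X^h.
Proof.
move=> le_ht; rewrite /U (big_pred1 set0) ?cards0 ?muln0 ?subn0 ?expr0 ?scale1r //.
move=> F; apply/idP/eqP => [famF|->]; last exact: family_set0.
apply/setP => s; rewrite inE; apply/negbTE/negP => sF.
move: famF; rewrite disjoint_tpath_familyE => /andP[/forall_inP /(_ s sF) + _].
by rewrite ltnNge (leq_trans le_ht (leq_addl _ _)).
Qed.

Definition last_start (h : nat) : 'I_h.+1 :=
  Ordinal (leq_ltn_trans (leq_subr t h) (ltnSn h)).

Section LastPath.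
Variable h : nat.
Hypothesis le_th : (t <= h)%N.

Let w_avoid := widen_ord (leqnSn h).
Let le_before : (h - t <= h.+1)%N := leq_trans (leq_subr t h) (leqnSn h).
Let w_before := widen_ord le_before.

Lemma fit_below_last (s : nat) : (s + t < h)%N = (s + t < h.+1)%N && (s != h - t)%N.
Proof. by rewrite ltnS ltn_neqAle -(eqn_add2r t s (h - t)) subnK // andbC. Qed.

Lemma family_avoid_last (G : {set 'I_h}) :
  disjoint_tpath_family t (w_avoid @: G) && (last_start h \notin w_avoid @: G) =
  disjoint_tpath_family t G.
Proof.
rewrite family_imset // disjoint_tpath_familyE andbAC; congr (_ && _).
apply/andP/forall_inP => [[/forall_inP fit /imsetP last_out] s sG | fitG].
  rewrite fit_below_last fit //=.
  by apply: contra_not_neq last_out => eq_s; exists s => //; apply: val_inj.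
split; first by apply/forall_inP => s /fitG; rewrite fit_below_last => /andP[].
apply/imsetP => -[s sG /(congr1 val) /= eq_s].
by move: (fitG s sG); rewrite fit_below_last -eq_s eqxx andbF.
Qed.

Lemma avoid_last_codom (F : {set 'I_h.+1}) :
  disjoint_tpath_family t F -> last_start h \notin F -> F \subset codom w_avoid.
Proof.
rewrite disjoint_tpath_familyE => /andP[/forall_inP fit _] last_out.
apply/subsetP => s sF; apply: codom_widen.
have : (s + t < h)%N.
  rewrite fit_below_last fit //=; apply: contraNneq last_out => eq_s.
  by rewrite (_ : last_start h = s) //; apply: val_inj.
exact: leq_ltn_trans (leq_addr t s).
Qed.

Lemma last_not_before (G : {set 'I_(h - t)}) : last_start h \notin w_before @: G.
Proof.
apply/imsetP => -[s _ /(congr1 val) /= eq_s].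
by move: (ltn_ord s); rewrite -eq_s ltnn.
Qed.

Lemma family_add_last (G : {set 'I_(h - t)}) :
  disjoint_tpath_family t (last_start h |: w_before @: G) = disjoint_tpath_family t G.
Proof.
set s0 := last_start h.
rewrite !disjoint_tpath_familyE; apply/andP/andP => -[/forall_inP fit /forall_inP sp].
  have inF s : s \in G -> w_before s \in s0 |: w_before @: G.
    by move=> sG; rewrite setU1r ?imset_f.
  split; apply/forall_inP => s sG.
    by have := forall_inP (sp _ (inF s sG)) s0 (setU11 _ _); rewrite /= ltn_ord.
  by apply/forall_inP => s' s'G; apply: (forall_inP (sp _ (inF s sG)) _ (inF s' s'G)).
split.
  apply/forall_inP => _ /setU1P[->|/imsetP[s sG ->]] /=; first by rewrite subnK.
  by have := fit s sG; lia.
apply/forall_inP => x xF; apply/forall_inP => y yF; apply/implyP.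
case/setU1P: xF => [->|/imsetP[s sG ->]]; case/setU1P: yF => [->|/imsetP[s' s'G ->]] /=.
- by rewrite ltnn.
- by have := ltn_ord s'; lia.
- by rewrite fit.
- exact: (implyP (forall_inP (sp s sG) s' s'G)).
Qed.

Lemma with_last_codom (F : {set 'I_h.+1}) :
  disjoint_tpath_family t (last_start h |: F) -> last_start h \notin F ->
  F \subset codom w_before.
Proof.
rewrite disjoint_tpath_familyE => /andP[/forall_inP fit /forall_inP sp] last_out.
apply/subsetP => s sF; apply: codom_widen; have sF' := setU1r (last_start h) sF.
have [lt|gt|eq] := ltngtP s (last_start h).
- by have := implyP (forall_inP (sp s sF') _ (setU11 _ _)) lt; rewrite /=; lia.
- by have := fit s sF'; move: gt; rewrite /=; lia.
- by move: last_out; rewrite (_ : last_start h = s) ?sF //; apply: val_inj.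
Qed.

(* Splitting the families of P_{h+1} according to whether they use the last
   t-path gives the three-term recurrence of the path polynomials. *)
Lemma U_step : U t h.+1 = 'X * U t h - U t (h - t).
Proof.
rewrite /U (bigID (fun F : {set 'I_h.+1} => last_start h \in F)) /= addrC; congr (_ + _).
  rewrite (reindex_imset (@widen_inj _ _ (leqnSn h))) => [|F /andP[]]; last exact: avoid_last_codom.
  rewrite mulr_sumr; apply: eq_big => [G|G famG]; first exact: family_avoid_last.
  rewrite family_avoid_last in famG; rewrite card_imset; last exact: widen_inj.
  by rewrite subSn ?family_size // exprS scalerAr.
rewrite (sum_setU1 _ (@disjoint_tpath_family t h.+1)) (reindex_imset (@widen_inj _ _ le_before)) => [|F /andP[]]; last exact: with_last_codom.
rewrite -sumrN; apply: eq_big => [G|G _]; first by rewrite family_add_last last_not_before andbT.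
rewrite cardsU1 last_not_before card_imset; last exact: widen_inj.
by rewrite add1n exprS mulN1r scaleNr mulnS subnDA subSS.
Qed.

End LastPath.
End Recurrence.
Lemma sum_sign_subsets (T : finType) (A : {set T}) :
  \sum_(F : {set T} | F \subset A) (-1) ^+ #|F| = (A == set0)%:R :> int.
Proof.
have [->|/set0Pn[a aA]] := eqVneq A set0.
  by rewrite (big_pred1 set0) ?cards0 ?expr0 // => F; rewrite subset0.
rewrite (bigID (fun F : {set T} => a \in F)) /= sum_setU1.
have -> : \sum_(F : {set T} | (a |: F \subset A) && (a \notin F)) (-1) ^+ #|a |: F| =
          - \sum_(F : {set T} | (F \subset A) && (a \notin F)) (-1) ^+ #|F| :> int.
  rewrite -sumrN; apply: eq_big => [F|F /andP[_ aF]]; first by rewrite subUset sub1set aA.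
  by rewrite cardsU1 aF exprS mulN1r.
by rewrite addNr.
Qed.

Section NoncrossingPartitions.
Variable t : nat.

Definition nc_partition (n : nat) (S : {set 'I_n}) (P : {set {set 'I_n}}) : bool :=
  [&& partition P S, [forall B in P, #|B| == t.+1] & noncrossing P].

Lemma muE (m : nat) : mu t m = #|[set P | nc_partition [set: 'I_m] P]|.
Proof. by []. Qed.

Lemma noncrossingP (n : nat) (P : {set {set 'I_n}}) :
  reflect (forall B1 B2, B1 \in P -> B2 \in P -> B1 != B2 ->
     forall a b c d : 'I_n, (a < b)%N -> (b < c)%N -> (c < d)%N ->
     a \in B1 -> c \in B1 -> b \in B2 -> d \in B2 -> False)
   (noncrossing P).
Proof.
apply: (iffP forall_inP) => [ncP B1 B2 B1P B2P ne a b c d ab bc cd aB cB bB dB|ncP B1 B1P].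
  move: (implyP (forall_inP (ncP B1 B1P) B2 B2P) ne).
  move=> /forallP /(_ a) /forallP /(_ b) /forallP /(_ c) /forallP /(_ d).
  by rewrite ab bc cd aB cB bB dB.
apply/forall_inP => B2 B2P; apply/implyP => ne.
apply/forallP => a; apply/forallP => b; apply/forallP => c; apply/forallP => d.
apply/negP => /and5P [ab bc cd aB /and3P [cB bB dB]].
exact: (ncP B1 B2 B1P B2P ne a b c d ab bc cd aB cB bB dB).
Qed.

Lemma noncrossingS (n : nat) (P Q : {set {set 'I_n}}) :
  P \subset Q -> noncrossing Q -> noncrossing P.
Proof.
move=> /subsetP sPQ /noncrossingP ncQ; apply/noncrossingP => B1 B2 B1P B2P.
exact: ncQ (sPQ _ B1P) (sPQ _ B2P).
Qed.

Definition convex (n : nat) (B : {set 'I_n}) : bool :=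
  [forall a in B, forall c in B, forall b : 'I_n, (a < b < c)%N ==> (b \in B)].

Lemma convexP (n : nat) (B : {set 'I_n}) :
  reflect (forall a b c : 'I_n, a \in B -> c \in B -> (a < b)%N -> (b < c)%N -> b \in B)
          (convex B).
Proof.
apply: (iffP forall_inP) => [conv a b c aB cB ab bc|conv a aB].
  by move: (forallP (forall_inP (conv a aB) c cB) b); rewrite ab bc.
apply/forall_inP => c cB; apply/forallP => b; apply/implyP => /andP[ab bc].
exact: conv aB cB ab bc.
Qed.

Lemma tpath_convex (n : nat) (s : 'I_n) : convex (tpath_vertices t s).
Proof.
apply/convexP => a b c; rewrite !in_tpath => /andP[sa _] /andP[_ ct] ab bc.
by rewrite (leq_trans sa (ltnW ab)) (leq_trans (ltnW bc) ct).
Qed.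

(* Adding convex blocks to a noncrossing partition keeps it noncrossing:
   a convex block cannot interleave with another block. *)
Lemma noncrossingU_convex (n : nat) (P R : {set {set 'I_n}}) :
  noncrossing P -> (forall B, B \in R -> convex B) ->
  trivIset (P :|: R) -> noncrossing (P :|: R).
Proof.
move=> /noncrossingP ncP convR triv.
apply/noncrossingP => B1 B2 B1in B2in ne a b c d ab bc cd aB cB bB dB.
have dis := trivIsetP triv B1 B2 B1in B2in ne.
case/setUP: B1in => [B1P|B1R].
  case/setUP: B2in => [B2P|B2R]; first exact: (ncP B1 B2 B1P B2P ne a b c d).
  by move: (disjointFl dis (convexP _ (convR B2 B2R) b c d bB dB bc cd)); rewrite cB.
by move: (disjointFr dis (convexP _ (convR B1 B1R) a b c aB cB ab bc)); rewrite bB.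
Qed.

Section Relabel.
Variables (k n : nat) (f : 'I_k -> 'I_n).
Hypothesis f_mono : forall i j : 'I_k, (i < j)%N -> (f i < f j)%N.

Lemma f_inj : injective f.
Proof.
move=> i j E; apply: val_inj; case: (ltngtP i j) => // lt.
  by move: (f_mono lt); rewrite E ltnn.
by move: (f_mono lt); rewrite E ltnn.
Qed.

Lemma f_mono_rev (i j : 'I_k) : (f i < f j)%N -> (i < j)%N.
Proof.
move=> lt_f; case: (ltngtP i j) => // [gt|eq]; last by move: lt_f; rewrite (val_inj eq) ltnn.
by move: (f_mono gt); rewrite ltnNge ltnW.
Qed.

Definition relabel (P : {set {set 'I_k}}) : {set {set 'I_n}} :=
  [set f @: (B : {set 'I_k}) | B in P].

Lemma relabel_inj : injective relabel.
Proof. exact: imset_inj (imset_inj f_inj). Qed.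

Lemma noncrossing_relabel (P : {set {set 'I_k}}) : noncrossing (relabel P) = noncrossing P.
Proof.
apply/noncrossingP/noncrossingP => ncP.
  move=> B1 B2 B1P B2P ne a b c d ab bc cd aB cB bB dB.
  apply: (ncP (f @: B1) (f @: B2) (imset_f _ B1P) (imset_f _ B2P) _ (f a) (f b) (f c) (f d));
    rewrite ?f_mono ?imset_f //.
  by rewrite (inj_eq (imset_inj f_inj)).
move=> _ _ /imsetP[B1 B1P ->] /imsetP[B2 B2P ->] ne a' b' c' d' ab bc cd.
move=> /imsetP[a aB Ea] /imsetP[c cB Ec] /imsetP[b bB Eb] /imsetP[d dB Ed].
subst a' b' c' d'.
apply: (ncP B1 B2 B1P B2P _ a b c d); rewrite ?f_mono_rev //.
by apply: contraNneq ne => ->.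
Qed.

Lemma nc_partition_relabel (P : {set {set 'I_k}}) :
  nc_partition (f @: [set: 'I_k]) (relabel P) = nc_partition [set: 'I_k] P.
Proof.
rewrite /nc_partition imset_partition ?noncrossing_relabel; last exact: f_inj.
congr [&& _, _ & _]; apply/forall_inP/forall_inP => [sizes B BP|sizes _ /imsetP[B BP ->]].
  by rewrite -(card_imset _ f_inj) sizes ?imset_f.
by rewrite card_imset ?sizes //; apply: f_inj.
Qed.

Lemma relabel_onto (Q : {set {set 'I_n}}) :
  partition Q (f @: [set: 'I_k]) -> Q = relabel [set f @^-1: (B : {set 'I_n}) | B in Q].
Proof.
move=> partQ; apply/(@setP _ Q) => B.
have back B' : B' \in Q -> f @: (f @^-1: B') = B'.
  move=> B'Q; apply: imset_preimset; apply/subsetP => x /(subsetP (partitionS partQ B'Q)).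
  by case/imsetP => y _ ->; apply: codom_f.
apply/idP/imsetP => [BQ|[_ /imsetP[B' B'Q ->] ->]]; last by rewrite back.
by exists (f @^-1: B); rewrite ?imset_f ?back.
Qed.

Lemma card_nc_partition_relabel :
  #|[set Q | nc_partition (f @: [set: 'I_k]) Q]| = mu t k.
Proof.
rewrite muE -(card_imset _ relabel_inj); apply: eq_card => Q.
rewrite inE; apply/idP/imsetP => [ncQ|[P ncP ->]]; last by rewrite nc_partition_relabel -inE.
have QE : Q = relabel [set f @^-1: (B : {set 'I_n}) | B in Q].
  by apply: relabel_onto; case/and3P: ncQ.
by exists [set f @^-1: (B : {set 'I_n}) | B in Q]; rewrite // inE -nc_partition_relabel -QE.
Qed.

End Relabel.
End NoncrossingPartitions.
Lemma increasing_enum (n : nat) (S : {set 'I_n}) :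
  exists f : 'I_#|S| -> 'I_n,
    (forall i j : 'I_#|S|, (i < j)%N -> (f i < f j)%N) /\ f @: [set: 'I_#|S|] = S.
Proof.
exists (fun i => enum_val i); split => [i j lt_ij|].
  have sorted_S : sorted (relpre val ltn) (enum S).
    rewrite /enum_mem -enumT; apply: sorted_filter; first by move=> x y z; apply: ltn_trans.
    by rewrite -sorted_map val_enum_ord iota_ltn_sorted.
  have x0 : 'I_n := enum_val i.
  rewrite (enum_val_nth x0 i) (enum_val_nth x0 j).
  apply: (sorted_ltn_nth (fun x y z : 'I_n => @ltn_trans (val x) (val y) (val z)) x0 sorted_S);
    by rewrite // inE -cardE ltn_ord.
apply/setP => x; apply/imsetP/idP => [[i _ ->]|xS]; first exact: enum_valP.
by exists (enum_rank_in xS x); rewrite ?inE // enum_rankK_in.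
Qed.

Section BlockRemoval.
Variable t : nat.

Lemma card_nc_partition (n : nat) (S : {set 'I_n}) :
  #|[set P | nc_partition t S P]| = mu t #|S|.
Proof.
have [f [f_mono fS]] := increasing_enum S.
by rewrite -(card_nc_partition_relabel t f_mono) fS.
Qed.

Variables (n : nat) (R : {set {set 'I_n}}).
Hypotheses (R_triv : trivIset R) (R_size : forall B, B \in R -> #|B| = t.+1)
  (R_convex : forall B, B \in R -> convex B).

Lemma R_nonempty (B : {set 'I_n}) : B \in R -> B != set0.
Proof. by move=> BR; rewrite -card_gt0 R_size. Qed.

Lemma nc_partition_disjoint (P : {set {set 'I_n}}) :
  nc_partition t (~: cover R) P -> [disjoint P & R].
Proof.
case/and3P => partP _ _; apply/pred0P => B /=; apply/negbTE/andP => -[BP BR].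
have /set0Pn[x xB] := R_nonempty BR.
have := subsetP (partitionS partP BP) x xB.
by rewrite inE (subsetP (bigcup_sup B BR)).
Qed.

Lemma nc_partition_remove (sg : {set {set 'I_n}}) :
  nc_partition t [set: 'I_n] sg -> R \subset sg ->
  nc_partition t (~: cover R) (sg :\: R).
Proof.
case/and3P => partsg /forall_inP sizes ncsg Rsg.
have trivsg := partition_trivIset partsg.
apply/and3P; split; last first.
- exact: noncrossingS (subsetDl sg R) ncsg.
- by apply/forall_inP => B /setDP[Bsg _]; apply: sizes.
apply/and3P; split; [|exact: trivIsetD|by rewrite in_setD negb_and (partition0 partsg) orbT].
apply/eqP/setP => x; rewrite in_setC; apply/bigcupP/idP => [[B /setDP[Bsg BR] xB]|xR].
  apply/bigcupP => -[B' B'R xB']; have neBB' : B != B' by apply: contraNneq BR => ->.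
  by move: (disjointFr (trivIsetP trivsg B B' Bsg (subsetP Rsg _ B'R) neBB') xB); rewrite xB'.
have /bigcupP[B Bsg xB] : x \in cover sg by rewrite (cover_partition partsg) inE.
by exists B => //; rewrite in_setD Bsg andbT; apply: contra xR => BR; apply/bigcupP; exists B.
Qed.

Lemma nc_partition_add (P : {set {set 'I_n}}) :
  nc_partition t (~: cover R) P -> nc_partition t [set: 'I_n] (P :|: R).
Proof.
move=> ncP; have disPR := nc_partition_disjoint ncP.
case/and3P: ncP => partP /forall_inP sizes ncP.
have trivPR : trivIset (P :|: R).
  rewrite setUC; apply: trivIsetU => //; first exact: partition_trivIset partP.
  by apply/pred0P => x /=; rewrite (cover_partition partP) inE andbN.
apply/and3P; split.
- apply/and3P; split => //; last first.
    by rewrite in_setU negb_or (partition0 partP) /=; apply/negP => /R_nonempty; rewrite eqxx.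
  apply/eqP/setP => x; rewrite inE /cover bigcup_setU in_setU.
  by rewrite -/(cover P) (cover_partition partP) inE orNb.
- by apply/forall_inP => B /setUP[BP|BR]; [apply: sizes | rewrite R_size].
- exact: noncrossingU_convex.
Qed.

Lemma card_nc_partition_containing :
  #|[set sg | nc_partition t [set: 'I_n] sg & R \subset sg]| =
  #|[set P | nc_partition t (~: cover R) P]|.
Proof.
rewrite -[RHS](@card_in_imset _ _ (fun P => P :|: R)); last first.
  move=> P1 P2; rewrite !inE => nc1 nc2 /= E.
  move: (nc_partition_disjoint nc1) (nc_partition_disjoint nc2) => /setDidPl <- /setDidPl <-.
  by rewrite -[LHS]setU0 -(setDv R) -setDUl E setDUl setDv setU0.
apply: eq_card => sg; rewrite inE; apply/andP/imsetP => [[ncsg Rsg]|[P ncP ->]].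
  exists (sg :\: R); first by rewrite inE nc_partition_remove.
  apply/setP => B; rewrite !inE; case: (boolP (B \in R)) => BR.
    by rewrite (subsetP Rsg).
  by rewrite orbF.
by split; [apply: nc_partition_add; rewrite -inE | apply: subsetUr].
Qed.

End BlockRemoval.
Section IntervalBlock.
Variables (t n : nat).

Definition hull (B : {set 'I_n}) : {set 'I_n} :=
  [set v : 'I_n | [exists a in B, exists c in B, (a <= v <= c)%N]].

Lemma hull_nested (B B' : {set 'I_n}) (b1 b2 : 'I_n) :
  b1 \in B -> b2 \in B -> (forall d, d \in B' -> (b1 < d < b2)%N) ->
  hull B' \proper hull B.
Proof.
move=> b1B b2B inside; rewrite properE; apply/andP; split.
  apply/subsetP => v; rewrite !inE => /exists_inP[e1 e1B' /exists_inP[e2 e2B' /andP[e1v ve2]]].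
  apply/exists_inP; exists b1 => //; apply/exists_inP; exists b2 => //.
  have /andP[b1e1 _] := inside e1 e1B'; have /andP[_ e2b2] := inside e2 e2B'.
  by rewrite (leq_trans (ltnW b1e1) e1v) (leq_trans ve2 (ltnW e2b2)).
apply/subsetPn; exists b1.
  by rewrite inE; apply/exists_inP; exists b1 => //; apply/exists_inP; exists b1; rewrite ?leqnn.
rewrite inE; apply/exists_inP => -[e1 e1B' /exists_inP[e2 _ /andP[e1b1 _]]].
by have /andP[b1e1 _] := inside e1 e1B'; move: e1b1; rewrite leqNgt b1e1.
Qed.

(* In a noncrossing partition of [n], a block with the smallest hull is
   convex: a gap of B would lie in a block nested strictly inside B. *)
Lemma min_hull_convex (sg : {set {set 'I_n}}) (B : {set 'I_n}) :
  partition sg [set: 'I_n] -> noncrossing sg -> B \in sg ->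
  (forall B', B' \in sg -> #|hull B| <= #|hull B'|)%N -> convex B.
Proof.
move=> partsg /noncrossingP ncsg Bsg Bmin; apply/convexP => b1 v b2 b1B b2B b1v vb2.
apply: contraT => vB.
have /bigcupP[B' B'sg vB'] : v \in cover sg by rewrite (cover_partition partsg) inE.
have neBB' : B != B' by apply: contraNneq vB => ->.
have disBB' := trivIsetP (partition_trivIset partsg) B B' Bsg B'sg neBB'.
have inside d : d \in B' -> (b1 < d < b2)%N.
  move=> dB'; apply/andP; split.
    case: (ltngtP b1 d) => // [db1|eq_b1]; last by move: (disjointFr disBB' b1B); rewrite (val_inj eq_b1) dB'.
    by case: (ncsg B' B B'sg Bsg _ d b1 v b2); rewrite // eq_sym.
  case: (ltngtP d b2) => // [b2d|eq_b2]; last by move: (disjointFr disBB' b2B); rewrite -(val_inj eq_b2) dB'.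
  by case: (ncsg B B' Bsg B'sg neBB' b1 v b2 d).
by move: (Bmin B' B'sg); rewrite leqNgt (proper_card (hull_nested b1B b2B inside)).
Qed.

Lemma convex_block_tpath (B : {set 'I_n}) :
  convex B -> #|B| = t.+1 -> exists2 s : 'I_n, (s + t < n)%N & B = tpath_vertices t s.
Proof.
move=> /convexP Bconv Bsize.
have [b0 b0B] : exists b0, b0 \in B by apply/set0Pn; rewrite -card_gt0 Bsize.
have [s sB smin] := arg_minnP (fun i : 'I_n => val i) b0B.
have B_sub : B \subset tpath_vertices t s.
  apply/subsetP => b bB; rewrite in_tpath smin //= leqNgt; apply/negP => far.
  have path_sub : tpath_vertices t s \subset B.
    apply/subsetP => v; rewrite in_tpath => /andP[sv vst].
    have [<-|ne] := eqVneq s v; first exact: sB.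
    by apply: (Bconv s v b) => //; [rewrite ltn_neqAle val_eqE ne | apply: leq_ltn_trans far].
  have : tpath_vertices t s \proper B.
    by rewrite properE path_sub; apply/subsetPn; exists b; rewrite // in_tpath [(b <= _)%N]leqNgt far andbF.
  by move/proper_card; rewrite card_tpath_fit ?Bsize ?ltnn // (ltn_trans far (ltn_ord b)).
have fit : (s + t < n)%N.
  have := subset_leq_card B_sub; rewrite Bsize card_tpath leq_min leqnn /=.
  by rewrite ltn_subRL.
by exists s => //; apply/eqP; rewrite eqEcard B_sub card_tpath_fit // Bsize leqnn.
Qed.

Lemma exists_tpath_block (sg : {set {set 'I_n}}) :
  nc_partition t [set: 'I_n] sg -> sg != set0 ->
  exists2 s : 'I_n, (s + t < n)%N & tpath_vertices t s \in sg.
Proof.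
case/and3P => partsg /forall_inP sizes ncsg /set0Pn[B0 B0sg].
have [B Bsg Bmin] := arg_minnP (fun B => #|hull B|) B0sg.
have [s fit Bs] := convex_block_tpath (min_hull_convex partsg ncsg Bsg Bmin) (eqP (sizes B Bsg)).
by exists s; rewrite -?Bs.
Qed.

End IntervalBlock.
Section MomentOfU.
Variable t : nat.

Lemma mu_containing (h : nat) (F : {set 'I_h}) : disjoint_tpath_family t F ->
  mu t (h - t.+1 * #|F|) =
  #|[set sg | nc_partition t [set: 'I_h] sg & blocks t F \subset sg]|.
Proof.
move=> famF; rewrite card_nc_partition_containing.
- rewrite card_nc_partition -card_cover_blocks //.
  by congr (mu t _); have := cardsC (cover (blocks t F)); rewrite card_ord; lia.
- exact: blocks_trivIset.
- move=> _ /imsetP[s sF ->]; apply: card_tpath_fit.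
  by move: famF; rewrite disjoint_tpath_familyE => /andP[/forall_inP ->].
- by move=> _ /imsetP[s _ ->]; apply: tpath_convex.
Qed.

Definition path_starts (n : nat) (sg : {set {set 'I_n}}) : {set 'I_n} :=
  [set s : 'I_n | (s + t < n)%N && (tpath_vertices t s \in sg)].

Lemma family_in_partition (n : nat) (sg : {set {set 'I_n}}) (F : {set 'I_n}) :
  trivIset sg ->
  (disjoint_tpath_family t F && (blocks t F \subset sg)) = (F \subset path_starts sg).
Proof.
move=> trivsg; apply/andP/subsetP => [[famF /subsetP Fsg] s sF|starts].
  rewrite inE Fsg ?imset_f // andbT.
  by move: famF; rewrite disjoint_tpath_familyE => /andP[/forall_inP ->].
have start_ok s : s \in F -> (s + t < n)%N /\ tpath_vertices t s \in sg.
  by move=> /starts; rewrite inE => /andP.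
split; last by apply/subsetP => _ /imsetP[s /start_ok[_ ?] ->].
apply/andP; split; first by apply/forall_inP => s /start_ok[].
apply/forall_inP => s sF; apply/forall_inP => s' s'F; apply/implyP => ne.
apply: (trivIsetP trivsg); [exact: (start_ok s sF).2 | exact: (start_ok s' s'F).2 |].
by apply: contraNneq ne => /tpath_inj ->.
Qed.

Lemma set_I0 (A : {set 'I_0}) : A = set0.
Proof. by apply/setP => -[]. Qed.

Lemma mu0 : mu t 0 = 1%N.
Proof.
rewrite muE (_ : [set P | nc_partition t [set: 'I_0] P] = [set set0]) ?cards1 //.
apply/setP => P; rewrite !inE; apply/idP/eqP => [/and3P[partP _ _]|->].
  by apply/setP => B; rewrite inE (set_I0 B) (partition0 partP).
rewrite /nc_partition /noncrossing (set_I0 [set: _]) partition_set0 eqxx /=.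
by apply/andP; split; apply/forall_inP => B; rewrite inE.
Qed.

Lemma Lfun_U (h : nat) : Lfun t (U t h) = (h == 0)%N%:R.
Proof.
have expand : Lfun t (U t h) = \sum_(F : {set 'I_h} | disjoint_tpath_family t F)
    \sum_(sg | nc_partition t [set: 'I_h] sg && (blocks t F \subset sg)) (-1) ^+ #|F|.
  rewrite /U Lfun_sum; apply: eq_bigr => F famF.
  rewrite Lfun_scale Lfun_Xn mu_containing // mulr_natr -sumr_const.
  by apply: eq_bigl => sg; rewrite inE.
(* each partition contributes the signed count of the subsets of its path starts *)
have by_partition : Lfun t (U t h) =
    \sum_(sg | nc_partition t [set: 'I_h] sg) (path_starts sg == set0)%:R.
  rewrite expand (exchange_big_dep (nc_partition t [set: 'I_h])) /=; last by move=> F sg _ /andP[].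
  apply: eq_bigr => sg ncsg; rewrite -sum_sign_subsets; apply: eq_bigl => F.
  by rewrite ncsg family_in_partition //; case/and3P: ncsg => /partition_trivIset.
(* for h = 0 only the empty partition exists; for h > 0 every partition is
   nonempty and so has a t-path block *)
rewrite by_partition; case: h {expand by_partition} => [|h].
  rewrite (eq_bigr (fun _ => 1)) => [|sg _]; last first.
    by rewrite (set_I0 (path_starts sg)) eqxx.
  rewrite (eq_bigl (fun sg => sg \in [set sg | nc_partition t [set: 'I_0] sg])) => [|sg]; last by rewrite inE.
  by rewrite sumr_const -muE mu0.
rewrite big1 // => sg ncsg.
have sg_ne : sg != set0.
  case/and3P: (ncsg) => partsg _ _; apply/set0Pn.
  have /bigcupP[B Bsg _] : ord0 \in cover sg by rewrite (cover_partition partsg) inE.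
  by exists B.
have [s fit ssg] := exists_tpath_block ncsg sg_ne.
suff /set0Pn/negbTE -> : exists s, s \in path_starts sg by [].
by exists s; rewrite inE fit ssg.
Qed.

End MomentOfU.
Section Biorthogonality.
Variable t : nat.

Definition moment (k h : nat) : int := Lfun t ('X^k * U t h).

Lemma moment0 (h : nat) : moment 0 h = (h == 0)%N%:R.
Proof. by rewrite /moment expr0 mul1r Lfun_U. Qed.

(* Multiplying by x moves along the three-term recurrence. *)
Lemma moment_step (k h : nat) :
  moment k.+1 h = moment k h.+1 + (if (t <= h)%N then moment k (h - t) else 0).
Proof.
rewrite /moment exprSr -mulrA; case: leqP => le_th.
  by rewrite U_step // -Lfun_add -mulrDr subrK.
by rewrite (U_small (ltnW le_th)) (U_small le_th) addr0 -exprS.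
Qed.

Lemma moment_vanish (k h : nat) : (k * t < h)%N -> moment k h = 0.
Proof.
elim: k h => [|k IH] h lt_kt_h; first by rewrite moment0; move: lt_kt_h; case: h.
rewrite moment_step IH ?add0r; last by move: lt_kt_h; rewrite mulSn; lia.
by case: leqP => // le_th; rewrite IH //; move: lt_kt_h; rewrite mulSn; lia.
Qed.

Lemma moment_diag (k : nat) : moment k (k * t) = 1.
Proof.
elim: k => [|k IH]; first by rewrite moment0.
rewrite moment_step moment_vanish ?add0r; last by rewrite mulSn; lia.
by rewrite mulSn leq_addr addKn.
Qed.

Lemma Lfun_UU (m n : nat) : Lfun t (U t m * U t n) =
  \sum_(F : {set 'I_n} | disjoint_tpath_family t F)
     (-1) ^+ #|F| * moment (n - t.+1 * #|F|) m.
Proof.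
rewrite {2}/U mulr_sumr Lfun_sum; apply: eq_bigr => F _.
by rewrite -scalerAr mulrC Lfun_scale.
Qed.

End Biorthogonality.

Theorem mainTheorem2 (t : nat) (ht : (1 <= t)%N) :
  (forall n m : nat, (n * t < m)%N -> Lfun t (U t m * U t n) = 0) /\
  (forall n : nat, Lfun t (U t (n * t) * U t n) = 1).
Proof.
split => [n m lt_nt_m | n].
  rewrite Lfun_UU big1 // => F _; rewrite moment_vanish ?mulr0 //.
  by rewrite (leq_ltn_trans _ lt_nt_m) // leq_mul2r leq_subr orbT.
rewrite Lfun_UU (bigD1 set0) ?family_set0 //= cards0 muln0 subn0 moment_diag mulr1.
rewrite big1 ?addr0 // => F /andP[famF F_ne]; rewrite moment_vanish ?mulr0 //.
have F_pos : (0 < t.+1 * #|F|)%N by rewrite muln_gt0 card_gt0 F_ne.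
by rewrite ltn_pmul2r // ltn_subrL F_pos (leq_trans F_pos (family_size famF)).
Qed.
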